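(* Let $K$ be either of the (two non-isomorphic) $2$-uniform tilings of the plane whose vertex types are $[3^1,4^2,6^1]$ and $[3^1,6^1,3^1,6^1]$. If $X$ is a map on the torus that is a quotient $X=K/\Gamma$ of $K$, then the vertices of $X$ form at most $3$ orbits under ${\rm Aut}(X)$.
   Context: A map is a polyhedral map: a cellular embedding of a connected graph in a closed surface such that the intersection of any two distinct faces is empty, a single vertex, or a single edge. For a vertex $u$, the faces containing $u$ form a cyclic sequence (the face-cycle at $u$); if this cyclic sequence consists of consecutive blocks of $n_1$ $p_1$-gons, then $n_2$ $p_2$-gons, ..., then $n_k$ $p_k$-gons, with cyclically consecutive $p_i$ distinct, then $u$ is said to have type $[p_1^{n_1},\dots,p_k^{n_k}]$ (defined up to cyclic shift and reversal). A $2$-uniform tiling is an edge-to-edge tiling of the Euclidean plane $\mathbb{R}^2$ by regular polygons whose symmetry group has exactly two orbits on the set of vertices; viewed as a map on the plane, its vertices have (at most) two types, listed as $[W;Z]$. (Up to isomorphism there are exactly $20$ such tilings.) For a map $K$ on the plane, a quotient of $K$ on the torus is a map $X$ on the torus together with a polyhedral covering map $\eta:K\to X$ with $X=K/\Gamma$, where $\Gamma\le {\rm Aut}(K)$ is a subgroup acting without fixed vertices, edges or faces and $K/\Gamma$ is homeomorphic to the torus. ${\rm Aut}(X)$ denotes the automorphism group of the map $X$, acting on its vertex set $V(X)$. *)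

From mathcomp Require Import all_boot all_order all_algebra.
Set Implicit Arguments. Unset Strict Implicit. Unset Printing Implicit Defensive.
Import GRing.Theory.
Local Open Scope ring_scope.

(* A vertex of a periodic tiling: a cell (a,b) of Z^2 (translation lattice)
   and a label among the 5 vertices of a fundamental cell. *)
Definition vert : Type := (int * int * 'I_5)%type.
Definition v0 : vert := (0, 0, ord0).

Definition mkv (a b : int) (i : nat) : vert := (a, b, inord i).

Definition shiftv (a b : int) (v : vert) : vert := (v.1.1 + a, v.1.2 + b, v.2).

(* Labels: 0 = middle vertex (type 3.6.3.6); 1,2 = top row, 3,4 = bottom row
   of a kagome band (type 3.4^2.6). Faces listed counterclockwise. *)
Definition common_faces : seq (seq vert) :=
  [:: [:: mkv 0 0 3; mkv 0 0 4; mkv 0 0 0];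
      [:: mkv 0 0 0; mkv 0 0 2; mkv 0 0 1];
      [:: mkv 1 0 0; mkv 1 0 1; mkv 0 0 2; mkv 0 0 0; mkv 0 0 4; mkv 1 0 3] ].

(* Tiling 1: kagome bands stacked by a pure vertical translation
   (triangles above triangles across each row of squares). *)
Definition tiling1 : seq (seq vert) :=
  common_faces ++
  [:: [:: mkv 0 0 1; mkv 0 0 2; mkv 0 1 4; mkv 0 1 3];
      [:: mkv 0 0 2; mkv 1 0 1; mkv 1 1 3; mkv 0 1 4] ].

(* Tiling 2: consecutive kagome bands shifted by one edge length
   (triangles above hexagons across each row of squares). *)
Definition tiling2 : seq (seq vert) :=
  common_faces ++
  [:: [:: mkv 0 0 1; mkv 0 0 2; mkv 0 1 3; mkv (-1) 1 4];
      [:: mkv 0 0 2; mkv 1 0 1; mkv 0 1 4; mkv 0 1 3] ].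

Section Maps.
Variable base : seq (seq vert).

Definition ofaceK (s : seq vert) : Prop :=
  exists2 f, f \in base & exists (a b : int) (r : nat), s = rot r (map (shiftv a b) f).

Definition ufaceK (s : seq vert) : Prop := ofaceK s \/ ofaceK (rev s).

Definition edgeK (u v : vert) : Prop :=
  exists2 s, ufaceK s & (u, v) \in zip s (rot 1 s).

Definition sameface (s t : seq vert) : Prop :=
  exists r, t = rot r s \/ t = rot r (rev s).

Definition autK (g : vert -> vert) : Prop :=
  bijective g /\ forall s, ufaceK s <-> ufaceK (map g s).

Definition subgroupAutK (G : (vert -> vert) -> Prop) : Prop :=
  [/\ G id,
      (forall g h, G g -> G h -> G (g \o h)),
      (forall g, G g -> exists2 h, G h & (forall v, h (g v) = v /\ g (h v) = v))
    & (forall g, G g -> autK g)].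

Variable G : (vert -> vert) -> Prop.

Definition orb (u v : vert) : Prop := exists2 g, G g & g u = v.

Definition acts_freely : Prop :=
  [/\ (forall g v, G g -> g v = v -> forall w, g w = w),
      (forall g u v, G g -> edgeK u v -> g u = v -> g v = u -> forall w, g w = w)
    & (forall g s, G g -> ufaceK s -> sameface s (map g s) -> forall w, g w = w)].

Definition nclasses (A : eqType) (P : A -> Prop) (R : A -> A -> Prop) (n : nat) : Prop :=
  exists reps : seq A,
    [/\ size reps = n, uniq reps, (forall x, x \in reps -> P x),
        (forall x y, x \in reps -> y \in reps -> R x y -> x = y)
      & (forall y, P y -> exists2 x, x \in reps & R x y)].

Definition edge_orb (e e' : vert * vert) : Prop :=
  exists2 g, G g & ((g e.1, g e.2) = e' \/ (g e.2, g e.1) = e').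

Definition face_orb (s t : seq vert) : Prop :=
  exists2 g, G g & sameface (map g s) t.

Definition euler_zero : Prop :=
  exists nv ne nf : nat,
    [/\ nclasses (fun _ : vert => True) orb nv,
        nclasses (fun e : vert * vert => edgeK e.1 e.2) edge_orb ne,
        nclasses ufaceK face_orb nf
      & (nv%:Z - ne%:Z + nf%:Z = 0)].

(* K/Gamma is homeomorphic to the torus: a closed (finitely many cells),
   orientable (Gamma preserves the orientation of K) surface of Euler
   characteristic 0. *)
Definition quotient_is_torus : Prop :=
  [/\ exists n, nclasses (fun _ : vert => True) orb n,
      (forall g s, G g -> ofaceK s -> ofaceK (map g s))
    & euler_zero].

Definition quotient_polyhedral : Prop :=
  (forall s, ufaceK s -> forall i j, (i < size s)%N -> (j < size s)%N ->
      orb (nth v0 s i) (nth v0 s j) -> i = j) /\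
  (forall s t, ufaceK s -> ufaceK t -> ~ face_orb s t ->
     let common := fun v => (exists2 u, u \in s & orb u v) /\
                            (exists2 w, w \in t & orb w v) in
     (forall v w, common v -> common w -> orb v w) \/
     (exists u1 u2 w1 w2,
        [/\ (u1, u2) \in zip s (rot 1 s), (w1, w2) \in zip t (rot 1 t),
            edge_orb (u1, u2) (w1, w2)
          & forall v, common v -> orb u1 v \/ orb u2 v])).

Definition torus_quotient : Prop :=
  [/\ subgroupAutK G, acts_freely, quotient_is_torus & quotient_polyhedral].

(* automorphisms of X = K/Gamma, represented by maps on V(K) inducing
   a bijection of V(X) = V(K)/Gamma that maps faces of X onto faces of X *)
Definition autX (tau : vert -> vert) : Prop :=
  [/\ (forall u v, orb u v <-> orb (tau u) (tau v)),
      (forall v, exists u, orb (tau u) v),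
      (forall s, ufaceK s -> exists2 t, ufaceK t &
          size t = size s /\ forall i, (i < size s)%N -> orb (tau (nth v0 s i)) (nth v0 t i))
    & (forall t, ufaceK t -> exists2 s, ufaceK s &
          size t = size s /\ forall i, (i < size s)%N -> orb (tau (nth v0 s i)) (nth v0 t i))].

Definition autX_at_most_3_orbits : Prop :=
  exists v1 v2 v3 : vert, forall v : vert, exists2 tau, autX tau &
     [\/ orb (tau v1) v, orb (tau v2) v | orb (tau v3) v].

End Maps.

From mathcomp Require Import all_boot all_order all_algebra.
From mathcomp Require Import zify.
Set Implicit Arguments. Unset Strict Implicit. Unset Printing Implicit Defensive.

Import GRing.Theory.

(* An orientation-preserving automorphism of K is determined by the image of
   one directed edge, since a directed edge lies on a single oriented face and
   K is connected.  It maps the base hexagon onto a hexagon, and comparing the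
   squares and triangles around it shows that it is a translation or a
   half-turn.  A half-turn fixes a vertex, an edge or a face of K, so the free,
   orientation-preserving group Gamma consists of translations.  Translations
   and half-turns therefore normalise Gamma and induce automorphisms of K/Gamma;
   modulo translations there are five vertex classes, and the half-turn pairs
   them as {0}, {1,4}, {2,3}. *)

Lemma nth_rot (T : Type) (x0 : T) (s : seq T) n i :
  (n <= size s)%N -> (i < size s)%N ->
  nth x0 (rot n s) i = nth x0 s ((i + n) %% size s).
Proof.
move=> le_n lt_i; rewrite /rot nth_cat size_drop.
case: ltnP => [lt_in | le_ni].
- by rewrite nth_drop modn_small; [congr nth; lia | lia].
- rewrite nth_take; last lia.
  have -> : (i + n = (i - (size s - n)) + size s)%N by lia.
  by rewrite modnDr modn_small //; lia.
Qed.

Lemma mem_zip_map (T U : eqType) (f : T -> U) s t x y :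
  (x, y) \in zip s t -> (f x, f y) \in zip (map f s) (map f t).
Proof.
elim: s t => [|a s IHs] [|b t] //=; rewrite !inE.
by case/orP=> [/eqP[-> ->] | /IHs ->]; rewrite ?eqxx ?orbT.
Qed.

Lemma shiftvA a b c d v : shiftv c d (shiftv a b v) = shiftv (a + c) (b + d) v.
Proof. by case: v => [[x y] l]; rewrite /shiftv /= !addrA. Qed.

Lemma shiftv0 v : shiftv 0 0 v = v.
Proof. by case: v => [[x y] l]; rewrite /shiftv /= !addr0. Qed.

Lemma shiftv_inj a b c d v : shiftv a b v = shiftv c d v -> a = c /\ b = d.
Proof. by case: v => [[x y] l] [/addrI -> /addrI ->]. Qed.

Lemma int_ind_step (P : int -> Prop) : P 0%R ->
  (forall a, P a -> P (a + 1)%R) -> (forall a, P (a + 1)%R -> P a) -> forall a, P a.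
Proof.
move=> P0 Pup Pdown; elim/int_ind => [|n|n] // Pn.
- by rewrite -addn1 PoszD; apply: Pup.
- by apply: Pdown; have -> : (- (n.+1)%:Z + 1 = - n%:Z)%R by lia.
Qed.

Definition vdiff (u v : vert) : int * int := (u.1.1 - v.1.1, u.1.2 - v.1.2)%R.

Definition translates (e e' : vert * vert) : bool :=
  [&& e.1.2 == e'.1.2, e.2.2 == e'.2.2 & vdiff e.2 e.1 == vdiff e'.2 e'.1].

Lemma translates_shiftv a b a' b' u v u' v' :
  shiftv a b u = shiftv a' b' u' -> shiftv a b v = shiftv a' b' v' ->
  translates (u, v) (u', v').
Proof.
case: u u' v v' => [[x y] l] [[x' y'] l'] [[z w] m] [[z' w'] m'].
rewrite /shiftv /translates /vdiff /= => -[ex ey ->] [ez ew ->].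
by rewrite !eqxx /=; apply/eqP; congr pair; lia.
Qed.

Definition face_edge (f : seq vert) (p : nat) : vert * vert :=
  (nth v0 f p, nth v0 f ((p + 1) %% size f)).

Lemma sameface_map (f : vert -> vert) s t : sameface s t -> sameface (map f s) (map f t).
Proof. by case=> r [->|->]; exists r; [left | right]; rewrite map_rot ?map_rev. Qed.

Section OrientedFaces.
Variable K : seq (seq vert).

(* The oriented faces of K fit together as on an oriented surface: a directed
   edge lies on a single oriented face, at a single position. *)
Definition base_edges_unique : bool :=
  all (fun f => all (fun f' => all (fun p => all (fun q =>
       translates (face_edge f p) (face_edge f' q) ==> (f == f') && (p == q))
     (iota 0 (size f'))) (iota 0 (size f))) K) K.

Definition preserves_ofaces (g : vert -> vert) : Prop :=
  forall s, ofaceK K s -> ofaceK K (map g s).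

Lemma ofaceK_nth s : ofaceK K s -> exists f a b r,
  [/\ f \in K, size s = size f &
   forall i, (i < size s)%N -> nth v0 s i = shiftv a b (nth v0 f ((i + r) %% size f))].
Proof.
case=> f Kf [a [b [r ->]]]; exists f, a, b, (minn r (size f)).
rewrite size_rot size_map rot_minn size_map; split=> // i lt_i.
have f_gt0 : (0 < size f)%N by case: (size f) lt_i.
by rewrite nth_rot ?size_map ?geq_minr // (nth_map v0) // ltn_pmod.
Qed.

Lemma ofaceK_shiftv f a b : f \in K -> ofaceK K (map (shiftv a b) f).
Proof. by move=> Kf; exists f => //; exists a, b, 0%N; rewrite rot0. Qed.

Lemma ofaceK_base f : f \in K -> ofaceK K f.
Proof. by move=> Kf; rewrite -[f]map_id -(eq_map shiftv0); apply: ofaceK_shiftv. Qed.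

Lemma preserves_ofaces_shiftv c d : preserves_ofaces (shiftv c d).
Proof.
move=> _ [f Kf [a [b [r ->]]]]; exists f => //; exists (a + c)%R, (b + d)%R, r.
by rewrite map_rot -map_comp; congr rot; apply: eq_map => v; rewrite /= shiftvA.
Qed.

Lemma preserves_ofaces_comp g h :
  preserves_ofaces g -> preserves_ofaces h -> preserves_ofaces (g \o h).
Proof. by move=> pg ph s Fs; rewrite map_comp; apply/pg/ph. Qed.

Lemma preserves_ufaceK g s : preserves_ofaces g -> ufaceK K s -> ufaceK K (map g s).
Proof. by move=> pg [Fs | Fs]; [left; apply: pg | right; rewrite -map_rev; apply: pg]. Qed.

Definition fixes_cell (tau : vert -> vert) : Prop :=
  [\/ exists v, tau v = v,
      exists u v, [/\ edgeK K u v, tau u = v & tau v = u]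
    | exists2 s, ufaceK K s & sameface s (map tau s)].

Lemma edgeK_preserved g u v : preserves_ofaces g -> edgeK K u v -> edgeK K (g u) (g v).
Proof.
move=> g_ofaces [s Fs uv]; exists (map g s); first exact: preserves_ufaceK.
by rewrite -map_rot; apply: mem_zip_map.
Qed.

Lemma fixes_cell_conj g tau x y :
  (forall v, g (shiftv x y v) = shiftv x y (tau v)) -> fixes_cell tau -> fixes_cell g.
Proof.
move=> g_tau [[v tau_v] | [u [v [uv tau_u tau_v]]] | [s Fs tau_s]].
- by apply: Or31; exists (shiftv x y v); rewrite g_tau tau_v.
- apply: Or32; exists (shiftv x y u), (shiftv x y v).
  rewrite !g_tau tau_u tau_v; split=> //.
  exact: edgeK_preserved (preserves_ofaces_shiftv x y) uv.
- apply: Or33; exists (map (shiftv x y) s).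
    exact: preserves_ufaceK (preserves_ofaces_shiftv x y) Fs.
  have -> : map g (map (shiftv x y) s) = map (shiftv x y) (map tau s).
    by rewrite -!map_comp; apply: eq_map => v; rewrite /= g_tau.
  exact: sameface_map.
Qed.

Hypothesis K_edges : base_edges_unique.

Lemma ofaceK_edge_rigid s t i j :
  ofaceK K s -> ofaceK K t -> (i < size s)%N -> (j < size t)%N ->
  face_edge s i = face_edge t j ->
  size s = size t /\
  forall k, nth v0 s ((i + k) %% size s) = nth v0 t ((j + k) %% size t).
Proof.
move=> /ofaceK_nth [f [a [b [r [Kf sz_s s_nth]]]]].
move=> /ofaceK_nth [f' [a' [b' [r' [Kf' sz_t t_nth]]]]] lt_i lt_j.
have f_gt0 : (0 < size f)%N by rewrite -sz_s; case: (size s) lt_i.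
have f'_gt0 : (0 < size f')%N by rewrite -sz_t; case: (size t) lt_j.
have s_shift k : nth v0 s ((i + k) %% size s) =
    shiftv a b (nth v0 f (((i + r) %% size f + k) %% size f)).
  by rewrite s_nth ?sz_s ?ltn_pmod // !modnDml addnAC.
have t_shift k : nth v0 t ((j + k) %% size t) =
    shiftv a' b' (nth v0 f' (((j + r') %% size f' + k) %% size f')).
  by rewrite t_nth ?sz_t ?ltn_pmod // !modnDml addnAC.
set p := ((i + r) %% size f)%N in s_shift; set q := ((j + r') %% size f')%N in t_shift.
have lt_p : (p < size f)%N by rewrite ltn_pmod.
have lt_q : (q < size f')%N by rewrite ltn_pmod.
move=> [e1 e2]; move: e1 e2.
rewrite -{1}(modn_small lt_i) -{1}(modn_small lt_j) -{1}(addn0 i) -{1}(addn0 j).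
rewrite !s_shift !t_shift !addn0 !(modn_small lt_p) !(modn_small lt_q) => e1 e2.
move/allP: K_edges => /(_ f Kf)/allP/(_ f' Kf')/allP/(_ p).
rewrite mem_iota lt_p => /(_ isT)/allP/(_ q); rewrite mem_iota lt_q => /(_ isT).
rewrite (translates_shiftv e1 e2) /= => /andP[/eqP ff' /eqP pq]; subst f'.
rewrite -pq in e1 t_shift; have [ea eb] := shiftv_inj e1; subst a' b'.
by split=> [|k]; [rewrite sz_s sz_t | rewrite s_shift t_shift].
Qed.

Variables g h : vert -> vert.
Hypotheses (g_ofaces : preserves_ofaces g) (h_ofaces : preserves_ofaces h).

Lemma eq_on_ofaceK s i : ofaceK K s -> (i < size s)%N ->
  g (face_edge s i).1 = h (face_edge s i).1 -> g (face_edge s i).2 = h (face_edge s i).2 ->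
  forall k, (k < size s)%N -> g (nth v0 s k) = h (nth v0 s k).
Proof.
move=> Fs lt_i e1 e2 k lt_k.
have s_gt0 : (0 < size s)%N by case: (size s) lt_i.
have edge_eq : face_edge (map g s) i = face_edge (map h s) i.
  by rewrite /face_edge !size_map !(nth_map v0) ?ltn_pmod // e1 e2.
have [_ same] := ofaceK_edge_rigid (g_ofaces Fs) (h_ofaces Fs)
  (i := i) (j := i) ltac:(by rewrite size_map) ltac:(by rewrite size_map) edge_eq.
have := same (k + (size s - i))%N; rewrite !size_map.
have -> : ((i + (k + (size s - i))) %% size s = k)%N.
  have -> : (i + (k + (size s - i)) = k + size s)%N by lia.
  by rewrite modnDr modn_small.
by rewrite !(nth_map v0).
Qed.

End OrientedFaces.

Definition cellv (a b : int) (l : nat) : vert := shiftv a b (mkv 0 0 l).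

Lemma shiftv_mkv a b x y l : shiftv a b (mkv x y l) = cellv (a + x) (b + y) l.
Proof. by rewrite /cellv /shiftv /mkv /=; congr (_, _, _); lia. Qed.

Lemma cellvE (v : vert) : v = cellv v.1.1 v.1.2 v.2.
Proof. by case: v => [[x y] l]; rewrite /cellv /shiftv /mkv /= !add0r inord_val. Qed.

Definition hexagon := [:: mkv 1 0 0; mkv 1 0 1; mkv 0 0 2; mkv 0 0 0; mkv 0 0 4; mkv 1 0 3].
Definition lower_triangle := [:: mkv 0 0 3; mkv 0 0 4; mkv 0 0 0].
Definition upper_triangle := [:: mkv 0 0 0; mkv 0 0 2; mkv 0 0 1].
Definition square1_left := [:: mkv 0 0 1; mkv 0 0 2; mkv 0 1 4; mkv 0 1 3].
Definition square1_right := [:: mkv 0 0 2; mkv 1 0 1; mkv 1 1 3; mkv 0 1 4].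
Definition square2_left := [:: mkv 0 0 1; mkv 0 0 2; mkv 0 1 3; mkv (-1) 1 4].
Definition square2_right := [:: mkv 0 0 2; mkv 1 0 1; mkv 0 1 4; mkv 0 1 3].

Lemma tiling1E :
  tiling1 = [:: lower_triangle; upper_triangle; hexagon; square1_left; square1_right].
Proof. by []. Qed.

Lemma tiling2E :
  tiling2 = [:: lower_triangle; upper_triangle; hexagon; square2_left; square2_right].
Proof. by []. Qed.

Section Rigidity.
Variables (K : seq (seq vert)) (g h : vert -> vert).
Hypotheses (K_edges : base_edges_unique K)
  (g_ofaces : preserves_ofaces K g) (h_ofaces : preserves_ofaces K h)
  (K_hexagon : hexagon \in K) (K_lower : lower_triangle \in K)
  (K_upper : upper_triangle \in K)
  (K_square : square1_left \in K \/ square2_right \in K).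

Let E v := g v = h v.

Lemma eq_on_shifted_face f a b i : f \in K -> (i < size f)%N ->
  E (shiftv a b (nth v0 f i)) -> E (shiftv a b (nth v0 f ((i + 1) %% size f))) ->
  forall k, (k < size f)%N -> E (shiftv a b (nth v0 f k)).
Proof.
move=> Kf lt_i e1 e2 k lt_k.
have f_gt0 : (0 < size f)%N by case: (size f) lt_i.
have := eq_on_ofaceK K_edges g_ofaces h_ofaces (ofaceK_shiftv a b Kf) (i := i).
rewrite /face_edge size_map !(nth_map v0) ?ltn_pmod //.
by move=> /(_ lt_i e1 e2 k); rewrite (nth_map v0) //; apply.
Qed.

Let eq_on_cell a b := forall l, (l < 5)%N -> E (cellv a b l).

Lemma eq_on_cell_of_hexagon_edge a b : E (cellv a b 2) -> E (cellv a b 0) ->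
  [/\ eq_on_cell a b, E (cellv (a + 1) b 0), E (cellv (a + 1) b 1)
    & E (cellv (a + 1) b 3)].
Proof.
move=> e2 e0.
have hex := eq_on_shifted_face K_hexagon (i := 2) isT e2 e0.
have e4 : E (cellv a b 4) := hex 4%N isT.
have e3 : E (cellv a b 3) := eq_on_shifted_face K_lower (i := 1) isT e4 e0 (k := 0) isT.
have e1 : E (cellv a b 1) := eq_on_shifted_face K_upper (i := 0) isT e0 e2 (k := 2) isT.
move: (hex 0%N isT) (hex 1%N isT) (hex 5%N isT); rewrite /= !shiftv_mkv !addr0.
by split=> // -[|[|[|[|[|l]]]]].
Qed.

Lemma eq_on_cell_right a b : eq_on_cell a b -> eq_on_cell (a + 1) b.
Proof.
move=> Eab; have [_ e0 e1 _] := eq_on_cell_of_hexagon_edge (Eab 2%N isT) (Eab 0%N isT).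
have e2 := eq_on_shifted_face K_upper (i := 2) isT e1 e0 (k := 1) isT.
by have [] := eq_on_cell_of_hexagon_edge e2 e0.
Qed.

Lemma eq_on_cell_left a b : eq_on_cell (a + 1) b -> eq_on_cell a b.
Proof.
move=> Eab.
have e0 : E (shiftv a b (mkv 1 0 0)) by rewrite shiftv_mkv addr0; apply: Eab.
have e1 : E (shiftv a b (mkv 1 0 1)) by rewrite shiftv_mkv addr0; apply: Eab.
have hex := eq_on_shifted_face K_hexagon (i := 0) isT e0 e1.
by have [] := eq_on_cell_of_hexagon_edge (hex 2%N isT) (hex 3%N isT).
Qed.

Lemma eq_on_cell_up a b : eq_on_cell a b -> eq_on_cell a (b + 1).
Proof.
move=> Eab; have [_ _ e'1 _] := eq_on_cell_of_hexagon_edge (Eab 2%N isT) (Eab 0%N isT).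
have [e4 e3] : E (cellv a (b + 1) 4) /\ E (cellv a (b + 1) 3).
  have [e'4 e'3] : E (shiftv a b (mkv 0 1 4)) /\ E (shiftv a b (mkv 0 1 3)).
    case: K_square => K_sq.
    - have sq := eq_on_shifted_face K_sq (i := 0) isT (Eab 1%N isT) (Eab 2%N isT).
      exact: conj (sq 2%N isT) (sq 3%N isT).
    - have e1 : E (shiftv a b (mkv 1 0 1)) by rewrite shiftv_mkv addr0.
      have sq := eq_on_shifted_face K_sq (i := 0) isT (Eab 2%N isT) e1.
      exact: conj (sq 2%N isT) (sq 3%N isT).
  by move: e'4 e'3; rewrite !shiftv_mkv !addr0.
have e0 := eq_on_shifted_face K_lower (i := 0) isT e3 e4 (k := 2) isT.
have e2 := eq_on_shifted_face K_hexagon (i := 3) isT e0 e4 (k := 2) isT.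
by have [] := eq_on_cell_of_hexagon_edge e2 e0.
Qed.

Lemma eq_on_cell_down a b : eq_on_cell a (b + 1) -> eq_on_cell a b.
Proof.
move=> Eab.
have e4 : E (shiftv a b (mkv 0 1 4)) by rewrite shiftv_mkv addr0; apply: Eab.
have e3 : E (shiftv a b (mkv 0 1 3)) by rewrite shiftv_mkv addr0; apply: Eab.
case: K_square => K_sq; have sq := eq_on_shifted_face K_sq (i := 2) isT e4 e3.
- have e2 : E (cellv a b 2) := sq 1%N isT.
  have e0 := eq_on_shifted_face K_upper (i := 1) isT e2 (sq 0%N isT) (k := 0) isT.
  by have [] := eq_on_cell_of_hexagon_edge e2 e0.
- have e2 : E (cellv a b 2) := sq 0%N isT.
  have e0 := eq_on_shifted_face K_hexagon (i := 1) isT (sq 1%N isT) e2 (k := 3) isT.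
  by have [] := eq_on_cell_of_hexagon_edge e2 e0.
Qed.

Lemma eq_of_eq_on_base_edge : E (cellv 0 0 2) -> E (cellv 0 0 0) -> g =1 h.
Proof.
move=> e2 e0; have [E00 _ _ _] := eq_on_cell_of_hexagon_edge e2 e0.
have Ea0 : forall a, eq_on_cell a 0 by apply: int_ind_step => // a;
  [apply: eq_on_cell_right | apply: eq_on_cell_left].
have Eab : forall a b, eq_on_cell a b by move=> a; apply: int_ind_step => // b;
  [apply: eq_on_cell_up | apply: eq_on_cell_down].
by move=> v; rewrite (cellvE v); apply: Eab.
Qed.

End Rigidity.

(* [inord] does not reduce, so concrete faces are rewritten with [mkvE] before
   being checked by computation; [flip_label] is a [match] for the same reason. *)
Lemma mkvE a b i (lt_i5 : (i < 5)%N) : mkv a b i = (a, b, Ordinal lt_i5).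
Proof. by congr (_, _, _); apply: val_inj; rewrite /= inordK. Qed.

Definition flip_label (l : 'I_5) : 'I_5 :=
  match val l with
  | 1 => @Ordinal 5 4 isT | 2 => @Ordinal 5 3 isT | 3 => @Ordinal 5 2 isT
  | 4 => @Ordinal 5 1 isT | _ => l
  end.

Definition half_turn (v : vert) : vert := (- v.1.1, - v.1.2, flip_label v.2)%R.

Lemma half_turnK : involutive half_turn.
Proof.
case=> [[x y] [[|[|[|[|[|l]]]]] lt_l]] //;
  by rewrite /half_turn /= !opprK //; congr (_, _); apply: val_inj.
Qed.

Lemma half_turn_shiftv a b v :
  half_turn (shiftv a b v) = shiftv (- a) (- b) (half_turn v).
Proof. by case: v => [[x y] l]; rewrite /half_turn /shiftv /= !opprD. Qed.

Lemma half_turn_mkv x y l : (l < 5)%N ->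
  half_turn (mkv x y l) = mkv (- x) (- y) (nth 0%N [:: 0; 4; 3; 2; 1]%N l).
Proof.
rewrite /half_turn /mkv /=; case: l => [|[|[|[|[|l]]]]] // _;
  by congr (_, _); apply: val_inj; rewrite /flip_label /= !inordK.
Qed.

Definition half_turn_closed (K : seq (seq vert)) : bool :=
  all (fun f => has (fun f' => has (fun c => has (fun d => has (fun r =>
       map half_turn f == rot r (map (shiftv c d) f'))
     (iota 0 (size f'))) [:: -1; 0; 1]%R) [:: -1; 0; 1]%R) K) K.

Lemma preserves_ofaces_half_turn K : half_turn_closed K -> preserves_ofaces K half_turn.
Proof.
move=> K_closed _ [f Kf [a [b [r ->]]]].
move/allP: K_closed => /(_ f Kf)/hasP[f' Kf' /hasP[c _ /hasP[d _ /hasP[r' _ /eqP hf]]]].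
exists f' => //; exists (c - a)%R, (d - b)%R;
  exists (rot_add (map (shiftv (c - a) (d - b)) f') r' r).
have shift_half_turn :
    map (half_turn \o shiftv a b) f = map (shiftv (- a) (- b)) (map half_turn f).
  by rewrite -map_comp; apply: eq_map => v; rewrite /= half_turn_shiftv.
have shift_shift :
    map (shiftv (- a) (- b) \o shiftv c d) f' = map (shiftv (c - a) (d - b)) f'.
  by apply: eq_map => v; rewrite /= shiftvA.
by rewrite map_rot -map_comp shift_half_turn hf map_rot -map_comp shift_shift rot_rot_add.
Qed.

Definition lattice_symmetry (tau : vert -> vert) : Prop := exists c d,
  (forall v, tau v = shiftv c d v) \/ (forall v, tau v = shiftv c d (half_turn v)).

Section Tilings.
Variable K : seq (seq vert).
Hypothesis K_tiling : K = tiling1 \/ K = tiling2.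

Lemma tiling_edges_unique : base_edges_unique K.
Proof.
by case: K_tiling => ->; [rewrite /tiling1 | rewrite /tiling2]; rewrite /common_faces !mkvE.
Qed.

Lemma tiling_half_turn : preserves_ofaces K half_turn.
Proof.
apply: preserves_ofaces_half_turn.
by case: K_tiling => ->; [rewrite /tiling1 | rewrite /tiling2]; rewrite /common_faces !mkvE.
Qed.

Lemma tiling_hexagon_unique f : f \in K -> size f = 6%N -> f = hexagon.
Proof.
by case: K_tiling => ->; rewrite ?tiling1E ?tiling2E !inE => /or4P[|||/orP[]] /eqP ->.
Qed.

Lemma tiling_base_faces : [/\ hexagon \in K, lower_triangle \in K,
  upper_triangle \in K & square1_left \in K \/ square2_right \in K].
Proof.
by case: K_tiling => ->; rewrite ?tiling1E ?tiling2E; split;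
  rewrite ?inE ?eqxx ?orbT //; [left | right].
Qed.

Lemma tiling_rigid g h : preserves_ofaces K g -> preserves_ofaces K h ->
  g (mkv 0 0 2) = h (mkv 0 0 2) -> g (mkv 0 0 0) = h (mkv 0 0 0) -> g =1 h.
Proof.
move=> g_ofaces h_ofaces; rewrite -[mkv 0 0 2]shiftv0 -[mkv 0 0 0]shiftv0.
have [K_hex K_lower K_upper K_square] := tiling_base_faces.
exact: eq_of_eq_on_base_edge tiling_edges_unique g_ofaces h_ofaces
  K_hex K_lower K_upper K_square.
Qed.

Lemma lattice_symmetry_ofaces tau : lattice_symmetry tau -> preserves_ofaces K tau.
Proof.
move=> [c [d [tau_shift | tau_half]]] s Fs.
- by rewrite (eq_map tau_shift); apply: preserves_ofaces_shiftv.
- rewrite (eq_map tau_half).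
  exact: preserves_ofaces_comp (preserves_ofaces_shiftv c d) tiling_half_turn s Fs.
Qed.

Lemma no_square_onto_triangle g a b T j : preserves_ofaces K g ->
  T = lower_triangle \/ T = upper_triangle -> (j < 3)%N ->
  g (mkv 0 0 2) = shiftv a b (nth v0 T j) ->
  g (mkv 1 0 1) = shiftv a b (nth v0 T ((j + 1) %% 3)) -> False.
Proof.
move=> g_ofaces T_tri lt_j e1 e2.
have [S KS [S4 S0 S1]] : exists2 S, S \in K &
    [/\ size S = 4%N, nth v0 S 0 = mkv 0 0 2 & nth v0 S 1 = mkv 1 0 1].
  case: K_tiling => ->; rewrite ?tiling1E ?tiling2E;
    [exists square1_right | exists square2_right]; by rewrite ?inE ?eqxx ?orbT.
have [size_T KT] : size T = 3%N /\ T \in K.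
  by have [_ ? ? _] := tiling_base_faces; case: T_tri => ->.
have edge_eq : face_edge (map g S) 0 = face_edge (map (shiftv a b) T) j.
  rewrite /face_edge !size_map S4 size_T !(nth_map v0) ?S4 ?size_T ?ltn_pmod //.
  by rewrite (modn_small (isT : (0 + 1 < 4)%N)) S0 S1 e1 e2.
have [] := ofaceK_edge_rigid tiling_edges_unique (g_ofaces _ (ofaceK_base KS))
  (ofaceK_shiftv a b KT) (i := 0) (j := j) ltac:(by rewrite size_map S4)
  ltac:(by rewrite size_map size_T) edge_eq.
by rewrite !size_map S4 size_T.
Qed.

Lemma preserves_ofaces_lattice_symmetry g : preserves_ofaces K g -> lattice_symmetry g.
Proof.
move=> g_ofaces; have [K_hex _ _ _] := tiling_base_faces.
have [f [a [b [r [Kf sz_f g_nth]]]]] := ofaceK_nth (g_ofaces _ (ofaceK_base K_hex)).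
rewrite size_map in sz_f; have ef := tiling_hexagon_unique Kf (esym sz_f); subst f.
have g_hex i : (i < 6)%N ->
    g (nth v0 hexagon i) = shiftv a b (nth v0 hexagon ((i + r %% 6) %% 6)).
  by move=> lt_i; rewrite -(nth_map v0 v0 g) // g_nth ?size_map // modnDmr.
have e2 := g_hex 2%N isT; have e1 := g_hex 1%N isT; have e3 := g_hex 3%N isT.
(* A rotation of the hexagon by 0 or 3 positions yields a translation or a
   half-turn; any other one sends the square edge from [mkv 0 0 2] to
   [mkv 1 0 1] onto a triangle edge. *)
have : (r %% 6 < 6)%N by rewrite ltn_mod.
move: e1 e2 e3 {g_nth g_hex}; case: (r %% 6)%N => [|[|[|[|[|[|m]]]]]] //= e1 e2 e3 _.
- by exists a, b; left; apply: tiling_rigid g_ofaces (preserves_ofaces_shiftv a b) e2 e3.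
- by case: (no_square_onto_triangle (T := upper_triangle) (j := 0) g_ofaces
    (or_intror erefl) isT e2 e1).
- by case: (no_square_onto_triangle (T := lower_triangle) (j := 1) g_ofaces
    (or_introl erefl) isT e2 e1).
- exists (a + 1)%R, b; right; apply: tiling_rigid g_ofaces
    (preserves_ofaces_comp (preserves_ofaces_shiftv _ _) tiling_half_turn) _ _ => /=.
  + by rewrite e2 half_turn_mkv // shiftv_mkv oppr0 !addr0.
  + by rewrite e3 half_turn_mkv // shiftv_mkv oppr0 !addr0.
- rewrite !shiftv_mkv !addr0 in e1 e2.
  by case: (no_square_onto_triangle (T := lower_triangle) (j := 2) g_ofaces
    (or_introl erefl) isT e2 e1).
- rewrite !shiftv_mkv !addr0 in e1 e2.
  by case: (no_square_onto_triangle (T := upper_triangle) (j := 2) g_ofaces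
    (or_intror erefl) isT e2 e1).
Qed.

Lemma half_turn_fixes_cell e f : e = 0%R \/ e = 1%R -> f = 0%R \/ f = 1%R ->
  fixes_cell K (shiftv e f \o half_turn).
Proof.
have [K_hex _ _ _] := tiling_base_faces.
case=> -> [] ->.
- by apply: Or31; exists (mkv 0 0 0); apply/eqP; rewrite !mkvE.
- case: K_tiling => K_eq.
  + apply: Or33; exists square1_left.
      by left; apply: ofaceK_base; rewrite K_eq tiling1E !inE eqxx ?orbT.
    by exists 2%N; left; apply/eqP; rewrite /square1_left !mkvE.
  + apply: Or32; exists (mkv 0 1 3), (mkv 0 0 2); split; try by apply/eqP; rewrite !mkvE.
    exists square2_right.
      by left; apply: ofaceK_base; rewrite K_eq tiling2E !inE eqxx ?orbT.
    by rewrite /square2_right !mkvE.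
- apply: Or33; exists hexagon; first by left; apply: ofaceK_base.
  by exists 3%N; left; apply/eqP; rewrite /hexagon !mkvE.
- case: K_tiling => K_eq.
  + apply: Or33; exists square1_right.
      by left; apply: ofaceK_base; rewrite K_eq tiling1E !inE eqxx ?orbT.
    by exists 2%N; left; apply/eqP; rewrite /square1_right !mkvE.
  + apply: Or32; exists (mkv 1 0 1), (mkv 0 1 4); split; try by apply/eqP; rewrite !mkvE.
    exists square2_right.
      by left; apply: ofaceK_base; rewrite K_eq tiling2E !inE eqxx ?orbT.
    by rewrite /square2_right !mkvE.
Qed.

Lemma acts_freely_no_half_turn G g c d : acts_freely K G -> G g ->
  ~ (forall v, g v = shiftv c d (half_turn v)).
Proof.
(* Conjugating by a translation moves the centre of the half-turn by an even
   lattice vector, which leaves four cases; each fixes a vertex, an edge or a face. *)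
move=> [free_v free_e free_f] Gg g_half.
have [x [e [ce e01]]] : exists x e, c = (x * 2 + e)%R /\ (e = 0%R \/ e = 1%R).
  by exists (c %/ 2)%Z, (c %% 2)%Z; lia.
have [y [f [df f01]]] : exists y f, d = (y * 2 + f)%R /\ (f = 0%R \/ f = 1%R).
  by exists (d %/ 2)%Z, (d %% 2)%Z; lia.
subst c d.
have g_conj v : g (shiftv x y v) = shiftv x y ((shiftv e f \o half_turn) v).
  by rewrite g_half half_turn_shiftv !shiftvA; congr shiftv; lia.
have g_id : forall w, g w = w.
  case: (fixes_cell_conj g_conj (half_turn_fixes_cell e01 f01)).
  - by case=> v; apply: free_v.
  - by case=> u [v [uv gu gv]]; apply: free_e uv gu gv.
  - by case=> s Fs; apply: free_f.
have := g_id (mkv 0 0 1); rewrite g_half half_turn_mkv //.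
by move/(congr1 (fun v : vert => val v.2)); rewrite /= !inordK.
Qed.

End Tilings.

Section QuotientSymmetries.
Variables (K : seq (seq vert)) (G : (vert -> vert) -> Prop).
Hypotheses (K_tiling : K = tiling1 \/ K = tiling2) (G_id : G id)
  (G_inv : forall g, G g -> exists2 h, G h & forall v, h (g v) = v /\ g (h v) = v)
  (G_translations : forall g, G g -> exists a b, forall v, g v = shiftv a b v).

Lemma orb_refl v : orb G v v.
Proof. by exists id. Qed.

(* Translations commute with [G]; a half-turn conjugates each translation of
   [G] into its inverse, which also lies in [G]. *)
Lemma lattice_symmetry_orb tau u v :
  lattice_symmetry tau -> orb G u v -> orb G (tau u) (tau v).
Proof.
move=> [c [d [tau_shift | tau_half]]] [g Gg <-]; have [a [b g_shift]] := G_translations Gg.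
- by exists g => //; rewrite !tau_shift !g_shift !shiftvA; congr shiftv; lia.
- have [h Gh hg] := G_inv Gg; have [a' [b' h_shift]] := G_translations Gh.
  have [ea eb] : a' = (- a)%R /\ b' = (- b)%R.
    have := (hg v0).1; rewrite h_shift g_shift shiftvA -{2}[v0]shiftv0.
    by move/shiftv_inj => [ea eb]; split; lia.
  exists h => //; rewrite !tau_half h_shift g_shift half_turn_shiftv !shiftvA ea eb.
  by congr shiftv; lia.
Qed.

Lemma lattice_symmetry_inv tau : lattice_symmetry tau ->
  exists2 tau', lattice_symmetry tau' & forall v, tau' (tau v) = v /\ tau (tau' v) = v.
Proof.
move=> [c [d [tau_shift | tau_half]]].
- exists (shiftv (- c) (- d)); first by exists (- c)%R, (- d)%R; left.
  by move=> v; rewrite !tau_shift !shiftvA addrN addNr addrN addNr shiftv0.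
- exists tau; first by exists c, d; right.
  by move=> v; rewrite !tau_half half_turn_shiftv half_turnK shiftvA !addNr shiftv0.
Qed.

Lemma lattice_symmetry_autX tau : lattice_symmetry tau -> autX K G tau.
Proof.
move=> tau_sym; have [tau' tau'_sym tauK] := lattice_symmetry_inv tau_sym.
split.
- move=> u v; split; first exact: lattice_symmetry_orb.
  by move/(lattice_symmetry_orb tau'_sym); rewrite !(tauK _).1.
- by move=> v; exists (tau' v); rewrite (tauK v).2; apply: orb_refl.
- move=> s Fs; exists (map tau s).
    exact: preserves_ufaceK (lattice_symmetry_ofaces K_tiling tau_sym) Fs.
  by split=> [|i lt_i]; rewrite ?size_map // (nth_map v0) //; apply: orb_refl.
- move=> t Ft; exists (map tau' t).
    exact: preserves_ufaceK (lattice_symmetry_ofaces K_tiling tau'_sym) Ft.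
  split=> [|i]; rewrite size_map // => lt_i.
  by rewrite (nth_map v0) // (tauK _).2; apply: orb_refl.
Qed.

End QuotientSymmetries.

Theorem theorem1 (K : seq (seq vert)) (HK : K = tiling1 \/ K = tiling2)
  (G : (vert -> vert) -> Prop) :
  torus_quotient K G -> autX_at_most_3_orbits K G.
Proof.
move=> [[G_id _ G_inv _] G_free [_ G_ofaces _] _].
have G_translations g : G g -> exists a b, forall v, g v = shiftv a b v.
  move=> Gg; have [a [b [g_shift | g_half]]] :=
    preserves_ofaces_lattice_symmetry HK (G_ofaces g^~ Gg).
  - by exists a, b.
  - by case: (acts_freely_no_half_turn HK G_free Gg g_half).
have autX_sym tau := lattice_symmetry_autX HK G_id G_inv G_translations (tau := tau).
exists (mkv 0 0 0), (mkv 0 0 1), (mkv 0 0 2) => v.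
rewrite (cellvE v); case: v => [[x y] [[|[|[|[|[|l]]]]] lt_l]] //=.
- exists (shiftv x y); first by apply: autX_sym; exists x, y; left.
  by apply: Or31; apply: orb_refl.
- exists (shiftv x y); first by apply: autX_sym; exists x, y; left.
  by apply: Or32; apply: orb_refl.
- exists (shiftv x y); first by apply: autX_sym; exists x, y; left.
  by apply: Or33; apply: orb_refl.
- exists (shiftv x y \o half_turn); first by apply: autX_sym; exists x, y; right.
  by apply: Or33; rewrite /= half_turn_mkv // oppr0; apply: orb_refl.
- exists (shiftv x y \o half_turn); first by apply: autX_sym; exists x, y; right.
  by apply: Or32; rewrite /= half_turn_mkv // oppr0; apply: orb_refl.
Qed.
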